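(* Let $\omega$ be a weight on a countable group $G$, and let $\mu$ be a probability measure on $G$ with $\mu\in\ell^{q_0}(G,\omega_{p_0})$, where $1<q_0\le p_0<\infty$ and $\frac1{p_0}+\frac1{q_0}=1$. (i) The map $[p_0,\infty)\to\mathbb{R}$, $p\mapsto-p\log\|\mu\|_{q,\omega_p}$, where $\frac1p+\frac1q=1$, is increasing. (ii) If in addition $\mu$ has finite Shannon entropy and finite $\log\omega$-moment, then \[ H_\omega(G,\mu)=\lim_{p\to\infty}-p\log\|\mu\|_{q,\omega_p},\qquad\frac1p+\frac1q=1. \]
   Context: A weight on $G$ is $\omega:G\to[a,\infty)$, $a>0$, with $\omega(st)\le C\omega(s)\omega(t)$ for some $C>0$. For $p\ge1$, $\omega_p=\omega^{1/p}$. For a weight $\sigma$ and $1\le q<\infty$, $\ell^q(G,\sigma)=\{f:\|f\|_{q,\sigma}<\infty\}$ with $\|f\|_{q,\sigma}=\big(\sum_s|f(s)|^q\sigma(s)^q\big)^{1/q}$. Shannon entropy $H(G,\mu)=-\sum_s\mu(s)\log\mu(s)$; finite $\log\omega$-moment means $\sum_s\mu(s)\log\omega(s)<\infty$. The weighted Shannon entropy is $H_\omega(G,\mu)=-\sum_s\mu(s)\log[\mu(s)\omega(s)]$. *)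

From HB Require Import structures.
From mathcomp Require Import all_boot all_order all_algebra.
From mathcomp Require Import all_classical all_reals all_analysis.
Set Implicit Arguments. Unset Strict Implicit. Unset Printing Implicit Defensive.
Import Order.TTheory GRing.Theory Num.Theory.
Local Open Scope classical_set_scope.
Local Open Scope ring_scope.

Definition is_group (G : Type) (mul : G -> G -> G) (e : G) (inv : G -> G) :=
  [/\ (forall x y z, mul x (mul y z) = mul (mul x y) z),
      (forall x, mul e x = x), (forall x, mul x e = x),
      (forall x, mul (inv x) x = e) & (forall x, mul x (inv x) = e)].

Definition is_weight (R : realType) (G : Type) (mul : G -> G -> G)
    (omega : G -> R) :=
  (exists2 a : R, 0 < a & forall s, a <= omega s) /\
  (exists2 C : R, 0 < C & forall s t, omega (mul s t) <= C * omega s * omega t).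

Definition wpow (R : realType) (G : Type) (omega : G -> R) (p : R) : G -> R :=
  fun s => omega s `^ p^-1.

Definition wsum (R : realType) (G : choiceType) (q : R) (sigma f : G -> R) : \bar R :=
  (\esum_(s in [set: G]) ((`|f s| `^ q * sigma s `^ q)%:E))%E.

Definition in_lq (R : realType) (G : choiceType) (q : R) (sigma f : G -> R) : Prop :=
  (wsum q sigma f < +oo)%E.

(* ||f||_{q,sigma} (meaningful when f in l^q(G,sigma)) *)
Definition wnorm (R : realType) (G : choiceType) (q : R) (sigma f : G -> R) : R :=
  fine (wsum q sigma f) `^ q^-1.

Definition conjexp (R : realType) (p : R) : R := p / (p - 1).

(* probability measure on G (all subsets measurable, G countable) *)
Definition is_prob (R : realType) (G : choiceType) (mu : G -> R) : Prop :=
  (forall s, 0 <= mu s) /\ (\esum_(s in [set: G]) (mu s)%:E = 1)%E.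

Definition sumG (R : realType) (G : choiceType) (f : G -> R) : \bar R :=
  (\esum_(s in [set: G]) (Num.max (f s) 0)%:E -
   \esum_(s in [set: G]) (Num.max (- f s) 0)%:E)%E.

Definition shannon (R : realType) (G : choiceType) (mu : G -> R) : \bar R :=
  sumG (fun s => - (mu s * ln (mu s))).

Definition log_moment (R : realType) (G : choiceType) (omega mu : G -> R) : \bar R :=
  sumG (fun s => mu s * ln (omega s)).

Definition wshannon (R : realType) (G : choiceType) (omega mu : G -> R) : \bar R :=
  sumG (fun s => - (mu s * ln (mu s * omega s))).

Definition Phi (R : realType) (G : choiceType) (omega mu : G -> R) (p : R) : R :=
  - (p * ln (wnorm (conjexp p) (wpow omega p) mu)).

(* Put t = 1/(p-1), write E for expectation under mu and L = log (mu omega).  Then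
   ||mu||_{q,omega_p}^q = E[exp (t L)], so -p log ||mu||_{q,omega_p} = -F(t) with
   F(t) = log E[exp (t L)] / t, and p -> oo corresponds to t -> 0+.
   (i) For 0 < t2 <= t1, convexity of exp (Jensen for x |-> x^(t2/t1)) gives
   E[exp (t2 L)] <= E[exp (t1 L)]^(t2/t1), i.e. F is nondecreasing.
   (ii) Jensen gives E[L] <= F(t), while log x <= x - 1 and exp u - 1 <= u exp u give
   F(t) <= E[L] + E[L (exp (t L) - 1)].  The last expectation vanishes as t -> 0+: for small t
   its integrand is dominated by a fixed summable function, so it is small off a finite set,
   and on that finite set it is O(t).  Finite entropy and log omega-moment make L integrable,
   and H_omega = -E[L]. *)

From HB Require Import structures.
From mathcomp Require Import all_boot all_order all_algebra.
From mathcomp Require Import all_classical all_reals all_analysis.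
From mathcomp Require Import ring lra.
Import Order.TTheory GRing.Theory Num.Theory.
Local Open Scope classical_set_scope.
Local Open Scope ring_scope.

Set Implicit Arguments.
Unset Strict Implicit.

Section RealSums.
Variables (R : realType) (G : choiceType).
Implicit Types (f g P N : G -> R) (k : R).

Definition nnsum f : \bar R := \esum_(s in [set: G]) (f s)%:E.
Arguments nnsum f%_ring_scope.

Definition abs_summable f := (nnsum (fun s => `|f s|%R) < +oo)%E.
(* Only meaningful for absolutely summable [f]: otherwise [fine] turns [+oo] into 0. *)
Definition rsum f : R := fine (nnsum f^\+) - fine (nnsum f^\-).

Lemma nnsum_ge0 f : (forall s, 0 <= f s) -> (0 <= nnsum f)%E.
Proof. by move=> f0; apply: esum_ge0 => s _; rewrite lee_fin. Qed.

Lemma le_nnsum f g : (forall s, f s <= g s) -> (nnsum f <= nnsum g)%E.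
Proof. by move=> fg; apply: le_esum => s _; rewrite lee_fin. Qed.

Lemma nnsumD f g : (forall s, 0 <= f s) -> (forall s, 0 <= g s) ->
  nnsum (f \+ g) = (nnsum f + nnsum g)%E.
Proof.
by move=> f0 g0; rewrite -esumD // => s _; rewrite lee_fin.
Qed.

Lemma nnsumZ k f : 0 <= k -> (forall s, 0 <= f s) ->
  nnsum (fun s => k * f s) = (k%:E * nnsum f)%E.
Proof.
move=> k0 f0; rewrite /nnsum /esum -ereal_supZl //; last first.
  by apply/set0P; exists (\sum_(s \in set0) (f s)%:E)%E; exists set0.
congr ereal_sup; apply/seteqP; split => x /=.
- case=> A [finA _] <-; exists (\sum_(s \in A) (f s)%:E)%E; first by exists A.
  by rewrite !fsumEFin // -EFinM mulr_fsumr.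
- case=> y [A [finA _] <-] <-; exists A => //.
  by rewrite !fsumEFin // -EFinM mulr_fsumr.
Qed.

Lemma nnsum_ge f s : (forall s, 0 <= f s) -> ((f s)%:E <= nnsum f)%E.
Proof.
move=> f0; rewrite /nnsum (esumID [set s]) ?setTI; last by move=> i _; rewrite lee_fin.
by rewrite esum_set1 ?lee_fin // leeDl // esum_ge0 // => i _; rewrite lee_fin.
Qed.

Lemma nnsum_fin_num f : (forall s, 0 <= f s) -> (nnsum f < +oo)%E ->
  nnsum f \is a fin_num.
Proof. by move=> f0 fty; rewrite ge0_fin_numE // nnsum_ge0. Qed.

Lemma abs_summable_ge0 f : (forall s, 0 <= f s) ->
  abs_summable f <-> (nnsum f < +oo)%E.
Proof.
move=> f0; rewrite /abs_summable (_ : (fun s => `|f s|) = f) //.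
by apply/funext => s; rewrite ger0_norm.
Qed.

Lemma abs_summable_le f g : (forall s, `|f s| <= `|g s|) ->
  abs_summable g -> abs_summable f.
Proof. by move=> fg; apply: le_lt_trans; apply: le_nnsum. Qed.

Lemma nnsum_funrpos_lty f : abs_summable f -> (nnsum f^\+ < +oo)%E.
Proof.
apply: le_lt_trans; apply: le_nnsum => s.
by rewrite /funrpos ge_max ler_norm normr_ge0.
Qed.

Lemma nnsum_funrneg_lty f : abs_summable f -> (nnsum f^\- < +oo)%E.
Proof.
apply: le_lt_trans; apply: le_nnsum => s.
by rewrite /funrneg ge_max -normrN ler_norm normr_ge0.
Qed.

Lemma abs_summableD f g : abs_summable f -> abs_summable g ->
  abs_summable (f \+ g).
Proof.
move=> sf sg; apply: le_lt_trans (lte_add_pinfty sf sg).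
by rewrite -nnsumD //; apply: le_nnsum => s; exact: ler_normD.
Qed.

Lemma abs_summableZ k f : abs_summable f -> abs_summable (fun s => k * f s).
Proof.
move=> sf; rewrite /abs_summable.
under eq_fun do rewrite normrM.
by rewrite nnsumZ // -(fineK (nnsum_fin_num _ sf)) // -EFinM ltry.
Qed.

Lemma abs_summableN f : abs_summable f -> abs_summable (\- f).
Proof. by apply: abs_summable_le => s; rewrite normrN. Qed.

Lemma abs_summableB f g : abs_summable f -> abs_summable g ->
  abs_summable (f \- g).
Proof. by move=> sf /abs_summableN; exact: abs_summableD. Qed.

Lemma rsum_ge0E f : (forall s, 0 <= f s) -> rsum f = fine (nnsum f).
Proof.
move=> f0; rewrite /rsum.
have -> : f^\+ = f by apply/funext => s; apply/max_idPl.
have -> : f^\- = fun=> 0 by apply/funext => s; apply/max_idPr; rewrite oppr_le0.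
by rewrite [X in _ - fine X]esum1 ?subr0.
Qed.

Lemma rsum_diff f P N : (forall s, 0 <= P s) -> (forall s, 0 <= N s) ->
  (nnsum P < +oo)%E -> (nnsum N < +oo)%E -> f = P \- N ->
  rsum f = fine (nnsum P) - fine (nnsum N).
Proof.
move=> P0 N0 Pty Nty ->.
have fpty : (nnsum ((P \- N)^\+)%R < +oo)%E.
  apply: le_lt_trans Pty; apply: le_nnsum => s.
  by rewrite ge_max P0 andbT gerDl oppr_le0.
have fnty : (nnsum ((P \- N)^\-)%R < +oo)%E.
  apply: le_lt_trans Nty; apply: le_nnsum => s.
  by rewrite ge_max N0 andbT opprB lerBlDr lerDl.
have /(congr1 nnsum) : (P \- N)^\+ \+ N = (P \- N)^\- \+ P.
  apply/funext => s; have /(congr1 (fun h => h s)) := funrposBneg (P \- N).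
  by rewrite !fctE /= => h; lra.
rewrite !nnsumD // => /(congr1 fine).
by rewrite !fineD ?nnsum_fin_num // /rsum; lra.
Qed.

Lemma rsumD f g : abs_summable f -> abs_summable g ->
  rsum (f \+ g) = rsum f + rsum g.
Proof.
move=> sf sg.
have [fp fn] := (nnsum_funrpos_lty sf, nnsum_funrneg_lty sf).
have [gp gn] := (nnsum_funrpos_lty sg, nnsum_funrneg_lty sg).
rewrite (@rsum_diff _ (f^\+ \+ g^\+) (f^\- \+ g^\-)) ?nnsumD ?lte_add_pinfty //.
- by rewrite !fineD ?nnsum_fin_num // /rsum; lra.
- by move=> s; apply: addr_ge0.
- by move=> s; apply: addr_ge0.
- apply/funext => s; have /(congr1 (fun h => h s)) := funrDB f g.
  by rewrite !fctE /= => <-.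
Qed.

Lemma rsumN f : rsum (\- f) = - rsum f.
Proof. by rewrite /rsum funrposN funrnegN opprB. Qed.

Lemma rsumB f g : abs_summable f -> abs_summable g ->
  rsum (f \- g) = rsum f - rsum g.
Proof. by move=> sf sg; rewrite rsumD ?rsumN //; exact: abs_summableN. Qed.

Lemma rsumZ k f : abs_summable f -> rsum (fun s => k * f s) = k * rsum f.
Proof.
move=> sf.
have fineZ h c : 0 <= c -> (forall s, 0 <= h s) -> (nnsum h < +oo)%E ->
    fine (nnsum (fun s => c * h s)) = c * fine (nnsum h).
  by move=> c0 h0 hty; rewrite nnsumZ // -(fineK (nnsum_fin_num h0 hty)).
have [fp fn] := (nnsum_funrpos_lty sf, nnsum_funrneg_lty sf).
have [fp0 fn0] := (funrpos_ge0 f, funrneg_ge0 f).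
have [k0|/ltW k0] := leP 0 k.
  rewrite /rsum ge0_funrposM // ge0_funrnegM //.
  by rewrite (fineZ _ _ k0 fp0 fp) (fineZ _ _ k0 fn0 fn) mulrBr.
have nk0 : 0 <= - k by rewrite oppr_ge0.
rewrite /rsum le0_funrposM // le0_funrnegM // (fineZ _ _ nk0 fp0 fp) (fineZ _ _ nk0 fn0 fn).
by rewrite mulrBr; lra.
Qed.

Lemma ler_rsum f g : abs_summable f -> abs_summable g ->
  (forall s, f s <= g s) -> rsum f <= rsum g.
Proof.
move=> sf sg fg; rewrite -subr_ge0 -rsumB // rsum_ge0E => [|s]; last by rewrite subr_ge0.
by apply: fine_ge0; apply: nnsum_ge0 => s; rewrite subr_ge0.
Qed.

Lemma rsum_ge f s : (forall s, 0 <= f s) -> abs_summable f -> f s <= rsum f.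
Proof.
move=> f0 /(abs_summable_ge0 f0) fty.
by rewrite rsum_ge0E // -lee_fin fineK ?nnsum_fin_num // nnsum_ge.
Qed.

Lemma sumG_rsum f : abs_summable f -> sumG f = (rsum f)%:E.
Proof.
move=> sf; have [fp fn] := (nnsum_funrpos_lty sf, nnsum_funrneg_lty sf).
rewrite (_ : sumG f = nnsum f^\+ - nnsum f^\-)%E // /rsum EFinB.
by rewrite !fineK // nnsum_fin_num.
Qed.

Lemma abs_summable_sumG f : (nnsum f^\- < +oo)%E -> (sumG f < +oo)%E ->
  abs_summable f.
Proof.
move=> fn; rewrite (_ : sumG f = nnsum f^\+ - nnsum f^\-)%E // => sty.
have fp : (nnsum f^\+ < +oo)%E.
  by rewrite -(subeK (nnsum f^\+) (nnsum_fin_num (funrneg_ge0 f) fn)) lte_add_pinfty.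
rewrite /abs_summable (_ : (fun s => _) = f^\+ \+ f^\-).
  by rewrite nnsumD // lte_add_pinfty.
apply/funext => s; have /(congr1 (fun h => h s)) := funrposDneg f.
by rewrite !fctE /= => <-.
Qed.

Lemma nnsum_fset (A : set G) f : finite_set A -> (forall s, 0 <= f s) ->
  nnsum (fun s => if s \in A then f s else 0) = (\sum_(s \in A) (f s)%:E)%E.
Proof.
move=> finA f0; rewrite -esum_fset // => [|s _]; last by rewrite lee_fin.
by rewrite esum_mkcond; apply: eq_esum => s _; case: (s \in A).
Qed.

Lemma abs_summable_fset (A : set G) f : finite_set A ->
  abs_summable (fun s => if s \in A then f s else 0).
Proof.
move=> finA; rewrite /abs_summable.
rewrite (_ : (fun s => _) = fun s => if s \in A then `|f s| else 0).
  by rewrite nnsum_fset // fsumEFin // ltry.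
by apply/funext => s; case: (s \in A); rewrite ?normr0.
Qed.

Lemma rsum_tail f eps : (forall s, 0 <= f s) -> abs_summable f -> 0 < eps ->
  exists2 A : set G, finite_set A &
    rsum (fun s => if s \in A then 0 else f s) <= eps.
Proof.
move=> f0 sf eps0; have fty := (abs_summable_ge0 f0).1 sf.
have := nnsum_fin_num f0 fty; rewrite /nnsum /esum => ffin.
have [_ [A [finA _] <-]] := ub_ereal_sup_adherent eps0 ffin.
rewrite -(fineK ffin) fsumEFin // lte_fin => hA.
exists A => //.
have fA0 s : 0 <= (if s \in A then f s else 0) by case: ifP.
rewrite (_ : (fun s => _) = f \- (fun s => if s \in A then f s else 0)).
  rewrite rsumB ?abs_summable_fset // !rsum_ge0E // nnsum_fset // fsumEFin //=.
  by rewrite /nnsum; lra.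
by apply/funext => s /=; case: (s \in A); rewrite ?subrr ?subr0.
Qed.

Lemma rsum_vanish_dominated (k : R -> G -> R) (D M : G -> R) (d0 eps : R) :
  0 < d0 -> abs_summable D ->
  (forall t s, 0 < t <= d0 -> 0 <= k t s <= D s) ->
  (forall t s, 0 < t <= d0 -> k t s <= t * M s) -> 0 < eps ->
  exists2 d, 0 < d & forall t, 0 < t <= d -> rsum (k t) <= eps.
Proof.
move=> d0_gt0 sD kD kM eps_gt0.
have D0 s : 0 <= D s.
  have := kD d0 s; rewrite d0_gt0 lexx => /(_ isT) /andP[k0 kD0].
  exact: le_trans k0 kD0.
(* Off a finite set [A] the tail of [D] is below [eps / 2]; on [A], [k t <= t M]. *)
have [A finA tailA] := rsum_tail D0 sD (divr_gt0 eps_gt0 (ltr0Sn _ 1)).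
set C := rsum (fun s => if s \in A then M s else 0).
have C1_gt0 : 0 < `|C| + 1 by rewrite ltr_wpDl.
exists (Num.min d0 (eps / 2 / (`|C| + 1))).
  by rewrite lt_min d0_gt0 !divr_gt0.
move=> t /andP[t_gt0]; rewrite le_min => /andP[td0 tC].
have tt : 0 < t <= d0 by rewrite t_gt0 td0.
have sMA := abs_summable_fset M finA.
have sDA : abs_summable (fun s => if s \in A then 0 else D s).
  by apply: abs_summable_le sD => s; case: ifP; rewrite ?normr0.
have sk : abs_summable (k t).
  apply: abs_summable_le sD => s.
  by have /andP[k0 kD'] := kD t s tt; rewrite !ger0_norm // (le_trans k0).
have := @ler_rsum (k t) ((fun s => t * (if s \in A then M s else 0)) \+
    (fun s => if s \in A then 0 else D s)) sk (abs_summableD (abs_summableZ t sMA) sDA).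
rewrite rsumD ?abs_summableZ // rsumZ // -/C.
have tCle : t * C <= eps / 2.
  apply: le_trans (ler_wpM2l (ltW t_gt0) (ler_norm C)) _.
  move: tC; rewrite ler_pdivlMr // mulrDr mulr1; have := ltW t_gt0; lra.
suff kbound : forall s,
    k t s <= t * (if s \in A then M s else 0) + (if s \in A then 0 else D s).
  by move/(_ kbound); lra.
move=> s; case: ifP => _; rewrite ?mulr0 ?add0r ?addr0; first exact: kM.
by case/andP: (kD t s tt).
Qed.
End RealSums.
Section ExpInequalities.
Variable R : realType.
Implicit Types (c u y t : R).

Lemma expR_convex_le c u : 0 <= c <= 1 -> expR (c * u) <= c * expR u + (1 - c).
Proof.
case/andP => c0 c1; have := convex_expR (Itv01 c0 c1) u 0.
by rewrite !convRE /= mulr0 addr0 expR0 mulr1; exact: id.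
Qed.

Lemma ln_le_sub1 y : 0 < y -> ln y <= y - 1.
Proof. by move=> y0; have := @le_ln1Dx R (y - 1); rewrite subrKC; apply; lra. Qed.

Lemma expR_sub1_le u : expR u - 1 <= u * expR u.
Proof.
have := expR_ge1Dx (- u); rewrite expRN => h.
have eu := expR_gt0 u.
have : (1 - u) * expR u <= (expR u)^-1 * expR u by rewrite ler_pM2r.
by rewrite mulVf ?gt_eqF //; lra.
Qed.

Lemma expR_le1D y t (t0 : R) : 0 <= t <= t0 -> expR (t * y) <= 1 + expR (t0 * y).
Proof.
case/andP => t_ge0 tt0; have := expR_gt0 (t0 * y).
have [y0|/ltW y0] := leP 0 y.
  have : expR (t * y) <= expR (t0 * y) by rewrite ler_expR ler_wpM2r.
  lra.
have : expR (t * y) <= 1 by rewrite expR_le1 mulr_ge0_le0.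
lra.
Qed.

Lemma mul_expR_sub1_ge0 y t : 0 <= t -> 0 <= y * (expR (t * y) - 1).
Proof.
move=> t0; have [y0|/ltW y0] := leP 0 y.
  by rewrite mulr_ge0 // subr_ge0 leNgt expR_lt1 -leNgt mulr_ge0.
by rewrite mulr_le0 // subr_le0 expR_le1 mulr_ge0_le0.
Qed.

Lemma mul_expR_sub1_le_sqr y t (t0 : R) : 0 <= t <= t0 ->
  y * (expR (t * y) - 1) <= t * (y ^+ 2 * (1 + expR (t0 * y))).
Proof.
case/andP => t_ge0 tt0; have ty2 : 0 <= t * y ^+ 2 by rewrite mulr_ge0 ?sqr_ge0.
have e0 := expR_gt0 (t0 * y).
have [y0|/ltW y0] := leP 0 y.
  have h1 : y * (expR (t * y) - 1) <= t * y ^+ 2 * expR (t * y).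
    by rewrite (_ : _ * expR _ = y * (t * y * expR (t * y))) ?ler_wpM2l ?expR_sub1_le //; ring.
  have h2 : t * y ^+ 2 * expR (t * y) <= t * y ^+ 2 * expR (t0 * y).
    by rewrite ler_wpM2l // ler_expR ler_wpM2r.
  have : t * y ^+ 2 * expR (t0 * y) <= t * y ^+ 2 * (1 + expR (t0 * y)).
    by rewrite ler_wpM2l // lerDr.
  lra.
have h1 : y * (expR (t * y) - 1) <= t * y ^+ 2.
  rewrite (_ : t * y ^+ 2 = y * (t * y)) ?ler_wnM2l //; last by ring.
  by have := expR_ge1Dx (t * y); lra.
have : t * y ^+ 2 <= t * y ^+ 2 * (1 + expR (t0 * y)).
  by rewrite ler_peMr // lerDl ltW.
lra.
Qed.

Lemma mul_expR_sub1_le_dom y t (t0 : R) : 0 < t0 -> 0 <= t <= t0 / 2 ->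
  y * (expR (t * y) - 1) <= 2 / t0 * expR (t0 * y) + Num.max (- y) 0.
Proof.
move=> t0_gt0 /andP[t_ge0 tt0].
have dom_ge0 : 0 <= 2 / t0 * expR (t0 * y) by rewrite mulr_ge0 ?expR_ge0 ?divr_ge0 ?ltW.
have [y0|/ltW y0] := leP 0 y; last first.
  have : -1 <= expR (t * y) - 1 by have := expR_ge0 (t * y); lra.
  move=> /(ler_wnM2l y0); rewrite (max_l (_ : 0 <= - y)) ?oppr_ge0 //; lra.
rewrite (max_r (_ : - y <= 0)) ?oppr_le0 // addr0 mulrBr mulr1.
pose v := t0 * y / 2.
have e2v : expR (t0 * y) = expR v * expR v by rewrite -expRD /v; congr expR; field.
have h1 : y * expR (t * y) <= y * expR v.
  by rewrite ler_wpM2l // ler_expR /v mulrAC ler_wpM2r.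
have h2 : y <= 2 / t0 * expR v.
  have := expR_ge1Dx v; rewrite -ler_pdivrMl ?divr_gt0 // invf_div /v; lra.
have : y * expR v <= 2 / t0 * expR v * expR v by rewrite ler_wpM2r ?expR_ge0.
rewrite e2v mulrA; lra.
Qed.

End ExpInequalities.

Section ProbabilityWeights.
Variables (R : realType) (G : choiceType) (m : G -> R).
Hypotheses (m_ge0 : forall s, 0 <= m s) (m_sum1 : nnsum m = 1%E).

Lemma abs_summable_m : abs_summable m.
Proof. by apply/(abs_summable_ge0 m_ge0); rewrite m_sum1 ltry. Qed.

Lemma rsum_m : rsum m = 1.
Proof. by rewrite rsum_ge0E // m_sum1. Qed.

Lemma rsum_mZ c : rsum (fun s => c * m s) = c.
Proof. by rewrite rsumZ ?abs_summable_m // rsum_m mulr1. Qed.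

Lemma m_le1 s : m s <= 1.
Proof. by rewrite -rsum_m; exact: rsum_ge abs_summable_m. Qed.

Lemma exists_m_gt0 : exists s, 0 < m s.
Proof.
apply/not_existsP => m_le0.
have m0 : m = (fun s => 0 * m s).
  apply/funext => s; rewrite mul0r; apply/eqP.
  by rewrite eq_le m_ge0 andbT leNgt; apply/negP/m_le0.
by move: rsum_m; rewrite m0 rsum_mZ => /eqP; rewrite eq_sym oner_eq0.
Qed.

Lemma rsum_m_expR_gt0 (u : G -> R) : abs_summable (fun s => m s * expR (u s)) ->
  0 < rsum (fun s => m s * expR (u s)).
Proof.
move=> se; have [s ms] := exists_m_gt0.
apply: lt_le_trans (rsum_ge s _ se) => [|x]; first by rewrite mulr_gt0 ?expR_gt0.
by rewrite mulr_ge0 ?expR_ge0.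
Qed.

Lemma le_ln_rsum_expR (u : G -> R) : abs_summable (fun s => m s * u s) ->
  abs_summable (fun s => m s * expR (u s)) ->
  rsum (fun s => m s * u s) <= ln (rsum (fun s => m s * expR (u s))).
Proof.
move=> su se; have Z_gt0 := rsum_m_expR_gt0 se.
set Z := rsum (fun s => m s * expR (u s)) in Z_gt0 *.
have sZ := abs_summableZ Z^-1 se.
have := ler_rsum (g := (fun s => ln Z * m s) \+ (fun s => Z^-1 * (m s * expR (u s))) \- m)
  su (abs_summableB (abs_summableD (abs_summableZ _ abs_summable_m) sZ) abs_summable_m).
rewrite rsumB ?rsumD ?rsumZ ?rsum_m ?abs_summableD ?abs_summableZ ?abs_summable_m //.
rewrite mulr1 mulVf ?gt_eqF // addrK; apply => s /=.
have := ln_le_sub1 (divr_gt0 (expR_gt0 (u s)) Z_gt0).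
rewrite ln_div ?posrE ?expR_gt0 // expRK => h.
rewrite (_ : _ - m s = m s * (ln Z + expR (u s) / Z - 1)); last by ring.
by rewrite ler_wpM2l //; lra.
Qed.

Lemma ln_rsum_expR_scale_le (u : G -> R) c : 0 <= c <= 1 ->
  abs_summable (fun s => m s * expR (u s)) ->
  abs_summable (fun s => m s * expR (c * u s)) ->
  ln (rsum (fun s => m s * expR (c * u s))) <= c * ln (rsum (fun s => m s * expR (u s))).
Proof.
move=> c01 se sce; have Z_gt0 := rsum_m_expR_gt0 se.
set Z := rsum (fun s => m s * expR (u s)) in Z_gt0 *.
set a := expR (c * ln Z).
(* Convexity of exp between 0 and [u s - ln Z] bounds [exp (c * u s)] by
   [a * (c * exp (u s) / Z + 1 - c)], whose expectation is [a]. *)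
have := ler_rsum
  (g := (fun s => a * c / Z * (m s * expR (u s))) \+ (fun s => a * (1 - c) * m s))
  sce (abs_summableD (abs_summableZ _ se) (abs_summableZ _ abs_summable_m)).
rewrite rsumD ?rsumZ ?rsum_m ?abs_summableZ ?abs_summable_m // -/Z.
rewrite (_ : a * c / Z * Z + a * (1 - c) * 1 = a); last by field; rewrite gt_eqF.
move=> le_rsum; rewrite -ler_expR lnK ?posrE ?rsum_m_expR_gt0 //.
apply: le_rsum => s /=.
have := expR_convex_le (u s - ln Z) c01.
rewrite expRB lnK ?posrE // => h.
rewrite (_ : expR (c * u s) = a * expR (c * (u s - ln Z))); last first.
  by rewrite /a -expRD; congr expR; ring.
rewrite (_ : _ + _ = m s * (a * (c * (expR (u s) / Z) + (1 - c)))); last by ring.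
by rewrite ler_wpM2l // ler_wpM2l ?expR_ge0.
Qed.

Lemma ln_rsum_expR_le (u : G -> R) : abs_summable (fun s => m s * u s) ->
  abs_summable (fun s => m s * expR (u s)) ->
  abs_summable (fun s => m s * u s * (expR (u s) - 1)) ->
  ln (rsum (fun s => m s * expR (u s))) <=
    rsum (fun s => m s * u s) + rsum (fun s => m s * u s * (expR (u s) - 1)).
Proof.
move=> su se sd; apply: le_trans (ln_le_sub1 (rsum_m_expR_gt0 se)) _.
rewrite -[in X in X <= _]rsum_m -rsumB ?abs_summable_m // -rsumD //.
apply: ler_rsum => [||s /=].
- exact: abs_summableB se abs_summable_m.
- exact: abs_summableD su sd.
- have := ler_wpM2l (m_ge0 s) (expR_sub1_le (u s)).
  have -> : m s * (u s * expR (u s)) = m s * u s + m s * u s * (expR (u s) - 1).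
    by ring.
  by rewrite mulrBr mulr1.
Qed.

End ProbabilityWeights.

Lemma conjexpE (R : realType) (p q : R) : 1 < p -> p^-1 + q^-1 = 1 ->
  q = conjexp p.
Proof.
move=> p_gt1 pq; have p_neq0 : p != 0 by rewrite gt_eqF // (lt_trans ltr01).
rewrite /conjexp -[q]invrK (_ : q^-1 = (p - 1) / p) ?invf_div //.
by rewrite -[q^-1](addKr p^-1) pq; field.
Qed.

Section WeightedEntropy.
Variables (R : realType) (G : choiceType) (m w : G -> R).
Hypotheses (m_ge0 : forall s, 0 <= m s) (m_sum1 : nnsum m = 1%E)
  (w_gt0 : forall s, 0 < w s).

Definition logmw s := ln (m s * w s).
Definition mwpow t s := m s * expR (t * logmw s).
Definition mlog s := m s * logmw s.
Definition mlog_dev t s := mlog s * (expR (t * logmw s) - 1).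
Definition mlog_dom t0 s := 2 / t0 * mwpow t0 s + mlog^\- s.

Lemma mwpow_ge0 t s : 0 <= mwpow t s.
Proof. by rewrite mulr_ge0 ?expR_ge0. Qed.

Lemma abs_summable_mwpow t t0 : 0 <= t <= t0 ->
  abs_summable (mwpow t0) -> abs_summable (mwpow t).
Proof.
move=> tt0 s0; apply: abs_summable_le (abs_summableD (abs_summable_m m_ge0 m_sum1) s0) => s.
rewrite !ger0_norm ?addr_ge0 ?mwpow_ge0 //.
by rewrite /mwpow -[X in _ <= X + _]mulr1 -mulrDr ler_wpM2l ?expR_le1D.
Qed.

Lemma abs_summable_mlog_dom t0 : abs_summable mlog -> abs_summable (mwpow t0) ->
  abs_summable (mlog_dom t0).
Proof.
move=> sl s0; apply: abs_summableD (abs_summableZ _ s0) _.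
exact/(abs_summable_ge0 (funrneg_ge0 mlog))/nnsum_funrneg_lty.
Qed.

Lemma mlog_dev_bounds t0 t s : 0 < t0 -> 0 <= t <= t0 / 2 ->
  0 <= mlog_dev t s <= mlog_dom t0 s.
Proof.
move=> t0_gt0 tt0; have [t_ge0 _] := andP tt0.
rewrite /mlog_dom /mlog_dev /mwpow /funrneg /mlog -mulrA mulr_ge0 ?mul_expR_sub1_ge0 //=.
rewrite -mulrN -[X in Num.max _ X](mulr0 (m s)) -maxr_pMr //.
rewrite [X in _ <= X + _]mulrCA -mulrDr.
by rewrite ler_wpM2l // mul_expR_sub1_le_dom.
Qed.

Lemma mlog_dev_le_sqr t0 t s : 0 <= t <= t0 ->
  mlog_dev t s <= t * (m s * (logmw s ^+ 2 * (1 + expR (t0 * logmw s)))).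
Proof.
move=> tt0; rewrite /mlog_dev /mlog -mulrA [X in _ <= X]mulrCA ler_wpM2l //.
exact: mul_expR_sub1_le_sqr.
Qed.

Lemma abs_summable_mlog_dev t0 t : 0 < t0 -> 0 <= t <= t0 / 2 ->
  abs_summable mlog -> abs_summable (mwpow t0) -> abs_summable (mlog_dev t).
Proof.
move=> t0_gt0 tt0 sl s0.
apply: abs_summable_le (abs_summable_mlog_dom sl s0) => s.
have /andP[d0 dD] := mlog_dev_bounds s t0_gt0 tt0.
by rewrite !ger0_norm // (le_trans d0).
Qed.

Lemma ln_rsum_mwpow_div_le t1 t2 : 0 < t2 <= t1 ->
  abs_summable (mwpow t1) -> abs_summable (mwpow t2) ->
  ln (rsum (mwpow t2)) / t2 <= ln (rsum (mwpow t1)) / t1.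
Proof.
move=> /andP[t2_gt0 t21] s1 s2; have t1_gt0 := lt_le_trans t2_gt0 t21.
have c01 : 0 <= t2 / t1 <= 1.
  by rewrite divr_ge0 ?(ltW t2_gt0) ?(ltW t1_gt0) //= ler_pdivrMr // mul1r.
have e : mwpow t2 = fun s => m s * expR (t2 / t1 * (t1 * logmw s)).
  by apply/funext => s; rewrite /mwpow mulrA divfK ?gt_eqF.
have /= := ln_rsum_expR_scale_le m_ge0 m_sum1 (u := fun s => t1 * logmw s) c01 s1.
rewrite -e => /(_ s2) le12.
rewrite ler_pdivrMr //; apply: le_trans le12 _.
by rewrite (_ : ln _ / t1 * t2 = t2 / t1 * ln (rsum (mwpow t1))) //; ring.
Qed.

Lemma rsum_mlog_le_div t : 0 < t -> abs_summable mlog -> abs_summable (mwpow t) ->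
  rsum mlog <= ln (rsum (mwpow t)) / t.
Proof.
move=> t_gt0 sl st; rewrite ler_pdivlMr // mulrC -rsumZ //.
have e : (fun s => t * mlog s) = fun s => m s * (t * logmw s).
  by apply/funext => s; rewrite /mlog mulrCA.
rewrite e; apply: le_ln_rsum_expR => //; rewrite -e; exact: abs_summableZ.
Qed.

Lemma ln_rsum_mwpow_le t : abs_summable mlog -> abs_summable (mwpow t) ->
  abs_summable (mlog_dev t) ->
  ln (rsum (mwpow t)) <= t * (rsum mlog + rsum (mlog_dev t)).
Proof.
move=> sl st sd.
have e1 : (fun s => m s * (t * logmw s)) = fun s => t * mlog s.
  by apply/funext => s; rewrite /mlog mulrCA.
have e2 : (fun s => m s * (t * logmw s) * (expR (t * logmw s) - 1)) =
    fun s => t * mlog_dev t s.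
  by apply/funext => s; rewrite /mlog_dev /mlog; ring.
have /= := ln_rsum_expR_le m_ge0 m_sum1 (u := fun s => t * logmw s).
rewrite e1 e2 !rsumZ // -mulrDr; apply => //; exact: abs_summableZ.
Qed.

Lemma rsum_mlog_dev_vanish t0 eps : 0 < t0 -> abs_summable mlog ->
  abs_summable (mwpow t0) -> 0 < eps ->
  exists2 d, 0 < d & forall t, 0 < t <= d -> rsum (mlog_dev t) <= eps.
Proof.
move=> t0_gt0 sl s0 eps_gt0.
pose M s := m s * (logmw s ^+ 2 * (1 + expR (t0 * logmw s))).
apply: (rsum_vanish_dominated (d0 := t0 / 2) (M := M) _
  (abs_summable_mlog_dom sl s0)) => // [|t s /andP[t_gt0 tt0]|t s /andP[t_gt0 tt0]].
- by rewrite divr_gt0.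
- by apply: mlog_dev_bounds => //; rewrite (ltW t_gt0).
- apply: mlog_dev_le_sqr; rewrite (ltW t_gt0) /=; apply: le_trans tt0 _.
  by rewrite ler_pdivrMr // ler_pMr // ler1n.
Qed.

Lemma ln_rsum_mwpow_div_near t0 eps : 0 < t0 -> abs_summable mlog ->
  abs_summable (mwpow t0) -> 0 < eps ->
  exists2 d, 0 < d & forall t, 0 < t <= d ->
    `|ln (rsum (mwpow t)) / t - rsum mlog| <= eps.
Proof.
move=> t0_gt0 sl s0 eps_gt0.
have [d d_gt0 dev_le] := rsum_mlog_dev_vanish t0_gt0 sl s0 eps_gt0.
exists (Num.min d (t0 / 2)); first by rewrite lt_min d_gt0 divr_gt0.
move=> t /andP[t_gt0]; rewrite le_min => /andP[td tt02].
have tt0 : t <= t0 by apply: le_trans tt02 _; rewrite ler_pdivrMr // ler_pMr // ler1n.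
have st : abs_summable (mwpow t) by apply: abs_summable_mwpow s0; rewrite ltW.
have sd : abs_summable (mlog_dev t).
  by apply: abs_summable_mlog_dev t0_gt0 _ sl s0; rewrite ltW.
have lo := rsum_mlog_le_div t_gt0 sl st.
have up : ln (rsum (mwpow t)) / t <= rsum mlog + eps.
  rewrite ler_pdivrMr // mulrC (le_trans (ln_rsum_mwpow_le sl st sd)) //.
  by rewrite ler_wpM2l ?(ltW t_gt0) // lerD2l dev_le // t_gt0.
by rewrite ler_norml; apply/andP; split; lra.
Qed.

Lemma wpow_conjexpE p s : 1 < p ->
  `|m s| `^ conjexp p * wpow w p s `^ conjexp p = mwpow (p - 1)^-1 s.
Proof.
move=> p_gt1; have p_neq0 : p != 0 by rewrite gt_eqF // (lt_trans ltr01).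
have p1_neq0 : p - 1 != 0 by rewrite subr_eq0 gt_eqF.
have [m0|m_neq0] := eqVneq (m s) 0.
  by rewrite /mwpow m0 normr0 powR0 ?mul0r // /conjexp mulf_neq0 ?invr_eq0.
have m_gt0 : 0 < m s by rewrite lt0r m_neq0 m_ge0.
rewrite /wpow -powRrM ger0_norm ?m_ge0 // /powR !gt_eqF ?w_gt0 //.
rewrite /mwpow /logmw lnM ?posrE ?w_gt0 //.
suff -> : m s * expR ((p - 1)^-1 * (ln (m s) + ln (w s))) =
    expR (ln (m s) + (p - 1)^-1 * (ln (m s) + ln (w s))).
  by rewrite -expRD; congr expR; rewrite /conjexp; field; rewrite p1_neq0 p_neq0.
by rewrite expRD lnK.
Qed.

Lemma wsum_conjexp p : 1 < p ->
  wsum (conjexp p) (wpow w p) m = nnsum (mwpow (p - 1)^-1).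
Proof. by move=> p_gt1; apply: eq_esum => s _; rewrite wpow_conjexpE. Qed.

Lemma in_lq_conjexpE p : 1 < p ->
  in_lq (conjexp p) (wpow w p) m <-> abs_summable (mwpow (p - 1)^-1).
Proof.
move=> p_gt1; rewrite /in_lq wsum_conjexp //.
exact: iff_sym (abs_summable_ge0 (mwpow_ge0 _)).
Qed.

Lemma Phi_mwpow p : 1 < p ->
  Phi w m p = - (ln (rsum (mwpow (p - 1)^-1)) / (p - 1)^-1).
Proof.
move=> p_gt1; have p_neq0 : p != 0 by rewrite gt_eqF // (lt_trans ltr01).
rewrite /Phi /wnorm wsum_conjexp // -rsum_ge0E => [|s]; last exact: mwpow_ge0.
by rewrite ln_powR /conjexp invf_div invrK; congr (- _); field.
Qed.

Lemma in_lq_conjexp_le p0 p : 1 < p0 <= p ->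
  in_lq (conjexp p0) (wpow w p0) m -> in_lq (conjexp p) (wpow w p) m.
Proof.
case/andP => p0_gt1 p0p; have p_gt1 := lt_le_trans p0_gt1 p0p.
rewrite !in_lq_conjexpE //; apply: abs_summable_mwpow.
by rewrite invr_ge0 subr_ge0 (ltW p_gt1) /= lef_pV2 ?posrE ?subr_gt0 // lerD2r.
Qed.

Lemma le_Phi p0 p1 p2 : 1 < p0 <= p1 -> p1 <= p2 ->
  in_lq (conjexp p0) (wpow w p0) m -> Phi w m p1 <= Phi w m p2.
Proof.
move=> /andP[p0_gt1 p01] p12 s0.
have p1_gt1 := lt_le_trans p0_gt1 p01; have p2_gt1 := lt_le_trans p1_gt1 p12.
have s_le p : p0 <= p -> abs_summable (mwpow (p - 1)^-1).
  move=> p0p; have p_gt1 := lt_le_trans p0_gt1 p0p.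
  by apply/(in_lq_conjexpE p_gt1)/(in_lq_conjexp_le _ s0); rewrite p0_gt1.
rewrite !Phi_mwpow // lerN2; apply: ln_rsum_mwpow_div_le.
- by rewrite invr_gt0 subr_gt0 p2_gt1 /= lef_pV2 ?posrE ?subr_gt0 // lerD2r.
- exact: s_le.
- exact: s_le (le_trans p01 p12).
Qed.

Lemma Phi_cvg p0 : 1 < p0 -> in_lq (conjexp p0) (wpow w p0) m ->
  abs_summable mlog -> (Phi w m p)%:E @[p --> +oo] --> (- rsum mlog)%:E.
Proof.
move=> p0_gt1 /(in_lq_conjexpE p0_gt1) s0 sl.
have t0_gt0 : 0 < (p0 - 1)^-1 by rewrite invr_gt0 subr_gt0.
apply: cvg_EFin; first exact: nearW.
apply/cvgrPdist_le => eps eps_gt0.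
have [d d_gt0 near_d] := ln_rsum_mwpow_div_near t0_gt0 sl s0 eps_gt0.
exists (Num.max p0 (1 + d^-1)); split; first by rewrite num_real.
move=> p; rewrite gt_max => /andP[p0p pd]; have p_gt1 := lt_trans p0_gt1 p0p.
rewrite /= Phi_mwpow // opprK addrC near_d // invr_gt0 subr_gt0 p_gt1 /=.
by rewrite -[d]invrK lef_pV2 ?posrE ?invr_gt0 ?subr_gt0 // lerBrDl ltW.
Qed.

Lemma wshannonE : abs_summable mlog -> wshannon w m = (- rsum mlog)%:E.
Proof.
move=> sl; rewrite (_ : wshannon w m = sumG (\- mlog)) // sumG_rsum ?rsumN //.
exact: abs_summableN.
Qed.

Lemma abs_summable_mlog a : 0 < a -> (forall s, a <= w s) ->
  (shannon m < +oo)%E -> (log_moment w m < +oo)%E -> abs_summable mlog.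
Proof.
move=> a_gt0 w_ge_a sH sL.
have -> : mlog = (fun s => m s * ln (w s)) \- (fun s => - (m s * ln (m s))).
  apply/funext => s; rewrite /mlog /logmw /= opprK.
  have [->|m_neq0] := eqVneq (m s) 0; first by rewrite !mul0r addr0.
  by rewrite lnM ?posrE ?w_gt0 ?lt0r ?m_neq0 ?m_ge0 // mulrDr addrC.
apply: abs_summableB; apply: abs_summable_sumG => //.
- apply: le_lt_trans (le_nnsum (g := fun s => Num.max (- ln a) 0 * m s) _) _.
  + move=> s; rewrite /funrneg -mulrN -[X in Num.max _ X](mulr0 (m s)) -maxr_pMr //.
    by rewrite mulrC ler_wpM2r // le_max2 // lerN2 ler_ln ?posrE ?w_ge_a.
  + by rewrite nnsumZ ?le_max ?lexx ?orbT // m_sum1 mule1 ltry.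
- apply: le_lt_trans (le_nnsum (g := m) _) _; last by rewrite m_sum1 ltry.
  move=> s; rewrite /funrneg opprK ge_max m_ge0 andbT.
  apply: le_trans (m_ge0 s); rewrite mulr_ge0_le0 // ln_le0 //.
  exact: m_le1 m_ge0 m_sum1 s.
Qed.

End WeightedEntropy.

Theorem theorem4p4 (R : realType) (G : countType)
    (mul : G -> G -> G) (e : G) (inv : G -> G) (omega mu : G -> R) (p0 q0 : R) :
  is_group mul e inv ->
  is_weight mul omega ->
  is_prob mu ->
  1 < q0 -> q0 <= p0 -> p0^-1 + q0^-1 = 1 ->
  in_lq q0 (wpow omega p0) mu ->
  ((forall p, p0 <= p -> in_lq (conjexp p) (wpow omega p) mu) /\
   (forall p1 p2, p0 <= p1 -> p1 <= p2 -> Phi omega mu p1 <= Phi omega mu p2)) /\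
  ((shannon mu < +oo)%E -> (log_moment omega mu < +oo)%E ->
   ((Phi omega mu p)%:E @[p --> +oo] --> wshannon omega mu)).
Proof.
move=> _ [[a a_gt0 omega_ge_a] _] [mu_ge0 mu_sum1] q0_gt1 q0_le_p0 conj_p0q0.
have omega_gt0 s : 0 < omega s := lt_le_trans a_gt0 (omega_ge_a s).
have p0_gt1 : 1 < p0 := lt_le_trans q0_gt1 q0_le_p0.
have p0_le p : p0 <= p -> 1 < p0 <= p by move=> ->; rewrite p0_gt1.
rewrite (conjexpE p0_gt1 conj_p0q0) => mu_lq0.
split; first split.
- by move=> p /p0_le p0p; apply: in_lq_conjexp_le mu_lq0.
- by move=> p1 p2 /p0_le p01 p12; apply: le_Phi mu_lq0.
- move=> shannon_lty log_moment_lty.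
  have smlog := abs_summable_mlog mu_ge0 mu_sum1 omega_gt0 a_gt0 omega_ge_a
    shannon_lty log_moment_lty.
  rewrite (wshannonE smlog).
  by apply: Phi_cvg mu_lq0 smlog.
Qed.
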